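(* Let $A\in\mathbb{R}^{n\times n}$, $b\in\mathbb{R}^n$, $x^0\in\mathbb{R}^n$. Suppose that the generalized Newton method $x^{k+1}=(A-D(x^k))^{-1}b$ is well defined for all $k\ge 0$ (i.e. every $A-D(x^k)$ is nonsingular) and that the sequence $\{x^k\}$ converges to some vector $x^*$. Then $x^*$ is a solution of $Ax-|x|=b$, and $x^k=x^*$ for all sufficiently large $k$. (No uniqueness of solutions of the equation is assumed.)
   Context: For $x\in\mathbb{R}^n$, $|x|$ is the componentwise absolute value, $\mathrm{sign}(x)$ is the vector whose components are $1,0,-1$ according as the corresponding component of $x$ is positive, zero, negative, and $D(x)=\mathrm{diag}(\mathrm{sign}(x))$. The generalized Newton method (GNM) for the absolute value equation $Ax-|x|=b$ is the iteration $x^{k+1}=(A-D(x^k))^{-1}b$, $k=0,1,\ldots$, from a given starting vector $x^0$. *)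

From HB Require Import structures.
From mathcomp Require Import all_boot all_order all_algebra.
From mathcomp Require Import all_classical all_reals all_analysis.
Set Implicit Arguments. Unset Strict Implicit. Unset Printing Implicit Defensive.
Import Order.TTheory GRing.Theory Num.Theory.
Local Open Scope ring_scope.

Definition absv (R : realType) (n : nat) (x : 'cV[R]_n) : 'cV[R]_n :=
  \col_i `|x i ord0|.

Definition Dsign (R : realType) (n : nat) (x : 'cV[R]_n) : 'M[R]_n :=
  diag_mx (\row_i Num.sg (x i ord0)).

From HB Require Import structures.
From mathcomp Require Import all_boot all_order all_algebra.
From mathcomp Require Import all_classical all_reals all_analysis.
Import Order.TTheory GRing.Theory Num.Theory.
Import numFieldNormedType.Exports.
Local Open Scope classical_set_scope.
Local Open Scope ring_scope.

(* Every iterate x^{k+1} = (A - D(x^k))^{-1} b is one of the at most 3^n vectors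
   (A - D)^{-1} b with D a diagonal matrix of signs.  A convergent sequence
   eventually confined to a finite set is eventually equal to its limit, since
   the finitely many other values stay at a positive distance from it.  Once
   x^k = x^{k+1} = y, the iteration reads (A - D(y)) y = b, and D(y) y = |y|. *)

Lemma cvg_finite_range_near_eq {K : numDomainType}
    {V : pseudoMetricNormedZmodType K} {T : Type} {F : set_system T}
    {FF : Filter F} {I : finType} {v : I -> V} {u : T -> V} {l : V} :
  (\forall t \near F, exists i, u t = v i) -> u @ F --> l ->
  \forall t \near F, u t = l.
Proof.
move=> u_range u_l.
have v_away : \forall t \near F, forall i, u t = v i -> v i = l.
  apply: filter_forall => i.
  have [->|v_neq_l] := eqVneq (v i) l; first exact: nearW.
  have dist_gt0 : 0 < `|l - v i| by rewrite normr_gt0 subr_eq0 eq_sym.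
  apply: filterS ((cvgrPdist_lt _ _).1 u_l _ dist_gt0) => t dist_lt u_v.
  by move: dist_lt; rewrite u_v ltxx.
by apply: filterS2 u_range v_away => t [i u_v] /(_ i u_v) <-.
Qed.

Lemma sgr_ord3 {R : realDomainType} (a : R) :
  exists j : 'I_3, j%:R - 1 = Num.sg a.
Proof.
have [a_lt0|a_gt0|->] := ltrgtP a 0.
- by exists ord0; rewrite ltr0_sg // sub0r.
- by exists (@Ordinal 3 2 isT); rewrite gtr0_sg // -natr1 addrK.
- by exists (@Ordinal 3 1 isT); rewrite sgr0 subrr.
Qed.

Definition sign_diag {R : pzRingType} {n : nat} (s : {ffun 'I_n -> 'I_3}) :
    'M[R]_n :=
  diag_mx (\row_i ((s i)%:R - 1)).

Lemma Dsign_sign_diag {R : realType} {n : nat} (x : 'cV[R]_n) :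
  exists s : {ffun 'I_n -> 'I_3}, Dsign x = sign_diag s.
Proof.
have [s sP] := fin_all_exists (fun i : 'I_n => sgr_ord3 (x i ord0)).
exists [ffun i => s i]; congr diag_mx; apply/rowP => i.
by rewrite !mxE ffunE sP.
Qed.

Lemma mul_Dsign_absv {R : realType} {n : nat} (x : 'cV[R]_n) :
  Dsign x *m x = absv x.
Proof. by apply/colP => i; rewrite mul_diag_mx !mxE -normrEsg. Qed.

Theorem corollary3p4 (R : realType) (n : nat) (A : 'M[R]_n) (b : 'cV[R]_n)
    (x : nat -> 'cV[R]_n) (xstar : 'cV[R]_n) :
  (forall k, (A - Dsign (x k)) \in unitmx) ->
  (forall k, x k.+1 = invmx (A - Dsign (x k)) *m b) ->
  x @ \oo --> xstar ->
  A *m xstar - absv xstar = b /\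
  exists K : nat, forall k, (K <= k)%N -> x k = xstar.
Proof.
move=> unit_step x_step x_cvg.
have x_range : \forall k \near \oo, exists s, x k = invmx (A - sign_diag s) *m b.
  exists 1%N => // [[|k]] // _.
  by rewrite x_step; have [s ->] := Dsign_sign_diag (x k); exists s.
have [K _ x_eq] := cvg_finite_range_near_eq x_range x_cvg.
have xK : x K = xstar by apply: x_eq => /=.
have xK1 : x K.+1 = xstar by apply: x_eq => /=.
split; last by exists K => k; apply: x_eq.
have xstar_fix : xstar = invmx (A - Dsign xstar) *m b.
  by rewrite -{1}xK1 x_step xK.
have unit_xstar : A - Dsign xstar \in unitmx by rewrite -xK.
by rewrite -mul_Dsign_absv -mulmxBl {2}xstar_fix mulKVmx.
Qed.
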